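(* Let $\Gamma$ be a finite, simple, connected graph and $G\le\mathrm{Aut}(\Gamma)$ acting transitively on $\mathrm{E}(\Gamma)$. Let $\{u,v\}$ be an edge of $\Gamma$ and let $N$ be a normal subgroup of $G$ such that $N_v^{\Gamma(v)}$ is transitive. Let $A$ be the set of vertices $a$ of $\Gamma$ such that there is a path of even length between $u$ and $a$. Then $N$ acts transitively on $A$.
   Context: $N_v^{\Gamma(v)}$ is the permutation group induced by the stabiliser $N_v$ of $v$ in $N$ on the neighbourhood $\Gamma(v)$ of $v$. *)

From mathcomp Require Import all_boot all_fingroup.
Set Implicit Arguments. Unset Strict Implicit. Unset Printing Implicit Defensive.

Definition walk_of_length (V : finType) (e : rel V) (k : nat) (x y : V) : Prop :=
  exists p : seq V, [/\ size p = k, path e x p & last x p = y].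

Definition even_reach (V : finType) (e : rel V) (u a : V) : Prop :=
  exists k, walk_of_length e (2 * k) u a.

Definition is_graph_aut (V : finType) (e : rel V) (g : {perm V}) : Prop :=
  forall x y, e (g x) (g y) = e x y.

Definition edge_transitive (V : finType) (e : rel V) (G : {set {perm V}}) : Prop :=
  forall x y x' y', e x y -> e x' y' ->
    exists2 g, g \in G &
      ((g x == x') && (g y == y')) || ((g x == y') && (g y == x')).

Definition local_transitive (V : finType) (e : rel V) (N : {set {perm V}}) (v : V) : Prop :=
  forall w w', e v w -> e v w' ->
    exists2 n, n \in N & (n v = v /\ n w = w').

From mathcomp Require Import all_boot all_fingroup.

Set Implicit Arguments.
Unset Strict Implicit.
Unset Printing Implicit Defensive.

(* Edge-transitivity puts one end of every edge in the G-orbit of u and the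
   other in the G-orbit of v, so the middle vertex x of any 2-step walk
   y - x - z with y in u^G lies in v^G.  Conjugating the local transitivity
   of N at v into x (N is normal in G) gives n in N with n y = z.  Hence,
   by induction on the length of the walk, every vertex at even distance
   from u lies in the N-orbit of u. *)

Local Open Scope group_scope.

Lemma orbitS (T : finType) (H G : {group {perm T}}) x y :
  H \subset G -> y \in orbit 'P H x -> y \in orbit 'P G x.
Proof. by move=> sHG /orbitP[h /(subsetP sHG) hG <-]; exact: mem_orbit. Qed.

Section EdgeTransitiveGraph.

Variables (V : finType) (e : rel V) (G N : {group {perm V}}).
Hypotheses (edgeG : edge_transitive e G)
  (autG : forall g, g \in G -> is_graph_aut e g) (nsNG : N <| G).

Lemma edge_transitive_orbit u v y x :
  e u v -> y \in orbit 'P G u -> e y x -> x \in orbit 'P G v.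
Proof.
move=> euv yGu eyx.
have [g gG /orP[/andP[_ /eqP <-]|/andP[/eqP gu /eqP gv]]] := edgeG euv eyx.
  by rewrite -[g v]/(aperm v g) mem_orbit.
have yGv : y \in orbit 'P G v by rewrite -gv -[g v]/(aperm v g) mem_orbit.
have xGu : x \in orbit 'P G u by rewrite -gu -[g u]/(aperm u g) mem_orbit.
by rewrite (orbit_transl _ xGu) -(orbit_transl _ yGu).
Qed.

Lemma local_transitive_orbit v x y z :
  local_transitive e N v -> x \in orbit 'P G v -> e x y -> e x z ->
  z \in orbit 'P N y.
Proof.
move=> locNv /orbitP[g gG <-]; rewrite /= apermE => egvy egvz.
have adj_ginv w : e (g v) w -> e v (g^-1 w).
  by rewrite -(autG (groupVr gG)) -permM mulgV perm1.
have [n nN [_ nz]] := locNv _ _ (adj_ginv _ egvy) (adj_ginv _ egvz).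
apply/orbitP; exists (n ^ g).
  by rewrite memJ_norm // (subsetP (normal_norm nsNG)).
by rewrite /= apermE /conjg !permM nz permKV.
Qed.

Hypothesis symE : symmetric e.
Variables (u v : V).
Hypotheses (euv : e u v) (locNv : local_transitive e N v).

Lemma even_walk_orbit k y p :
  y \in orbit 'P N u -> size p = (2 * k)%N -> path e y p ->
  last y p \in orbit 'P N u.
Proof.
elim: k y p => [|k IHk] y [|x [|z p]] //= yNu;
  rewrite mulnS !addSn add0n => -[] // sp.
case/and3P=> eyx exz pp; apply: IHk sp pp.
have xGv := edge_transitive_orbit euv (orbitS (normal_sub nsNG) yNu) eyx.
have zNy := local_transitive_orbit locNv xGv (_ : e x y) exz.
by rewrite (orbit_transl _ (zNy _)) // symE.
Qed.

Lemma even_reach_orbit a : even_reach e u a -> a \in orbit 'P N u.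
Proof. by case=> k [p [sp pp <-]]; exact: even_walk_orbit (orbit_refl _ _ _) sp pp. Qed.

End EdgeTransitiveGraph.

Theorem lemma2p6 (V : finType) (e : rel V)
  (Hsym : symmetric e) (Hirr : irreflexive e)
  (Hconn : forall x y : V, connect e x y)
  (G N : {group {perm V}})
  (HGaut : forall g, g \in G -> is_graph_aut e g)
  (HGedge : edge_transitive e G)
  (u v : V) (Huv : e u v)
  (HN : (N <| G)%g)
  (Hloc : local_transitive e N v) :
  forall a b : V, even_reach e u a -> even_reach e u b ->
    exists2 n, n \in N & n a = b.
Proof.
move=> a b reach_a reach_b.
have aNu := even_reach_orbit HGedge HGaut HN Hsym Huv Hloc reach_a.
have bNu := even_reach_orbit HGedge HGaut HN Hsym Huv Hloc reach_b.
have /orbitP[n nN nab] : b \in orbit 'P N a.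
  by rewrite (orbit_transl _ bNu) orbit_sym.
by exists n; rewrite // -nab /= apermE.
Qed.
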